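(* In the random execution model of the context, let $T_{\max}(t)=\max_iT_i(t)$ be the time at which the last node finishes iteration $t$. Then for all $\nu>0$ and all $t$, $$\mathbb{P}\big(T_{\max}(t)\ge\nu t\big)\le\sum_{w\ge\nu t}\sum_{i=1}^n\mathbb{E}\big[X^t(i,w)\big].$$
   Context: There are $n$ nodes and a communication graph. At each iteration $t$, independently, either a communication edge $(i,j)$ is activated (with probability $p_{ij}$) or a node $i$ performs a local computation (with probability $p_i^{\rm comp}$). Activating $(i,j)$ at iteration $t$ takes a random time $\tau_c^{ij}(t)$ and a local computation at $i$ takes a random time $\tau_l^i(t)$; these are positive-integer-valued. Completion times: $T_i(0)=0$; if $(k,\ell)$ is activated at iteration $t$, $T_k(t+1)=T_\ell(t+1)=\max(T_k(t),T_\ell(t))+\tau_c^{k\ell}(t)$; if $k$ computes, $T_k(t+1)=T_k(t)+\tau_l^k(t)$; other $T_i$ unchanged. Integer variables $X^t(i,w)$, $w\in\mathbb{N}$ (with $X^t(i,w)=0$ for $w<0$): $X^0(i,0)=1$ and $X^0(i,w)=0$ for $w\ne0$. If $(i,j)$ is activated at iteration $t$, then for all $w$, $X^{t+1}(i,w)=X^{t+1}(j,w)=X^t(i,w-\tau_c^{ij}(t))+X^t(j,w-\tau_c^{ij}(t))$; if node $i$ computes, $X^{t+1}(i,w+\tau_l^i(t))=X^t(i,w)$ for all $w\ge0$ and $X^{t+1}(i,w)=0$ for $w<\tau_l^i(t)$; all other $X^{t+1}(h,\cdot)=X^t(h,\cdot)$. *)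

From HB Require Import structures.
From mathcomp Require Import all_boot all_order all_algebra.
From mathcomp Require Import all_classical all_reals all_analysis.
Set Implicit Arguments. Unset Strict Implicit. Unset Printing Implicit Defensive.
Import Order.TTheory GRing.Theory Num.Theory.

(* Event performed at one iteration: either an edge (k,l) is activated
   (we use the convention k < l for the unordered edge {k,l}),
   or node k performs a local computation. *)
Inductive action (n : nat) : Type :=
  | Comm of 'I_n & 'I_n
  | Comp of 'I_n.

(* One step of the completion times T. tc k l = tau_c^{kl}(t), tl k = tau_l^k(t). *)
Definition stepT n (a : action n) (tc : 'I_n -> 'I_n -> nat) (tl : 'I_n -> nat)
  (T : 'I_n -> nat) : 'I_n -> nat :=
  fun h => match a with
  | Comm k l => if (h == k) || (h == l) then maxn (T k) (T l) + tc k l else T h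
  | Comp k => if h == k then T h + tl k else T h
  end.

(* One step of the counting variables X(i,w), w in N (X(i,w) = 0 for w < 0). *)
Definition stepX n (a : action n) (tc : 'I_n -> 'I_n -> nat) (tl : 'I_n -> nat)
  (X : 'I_n -> nat -> nat) : 'I_n -> nat -> nat :=
  fun h w => match a with
  | Comm k l => if (h == k) || (h == l) then
                  (if tc k l <= w then X k (w - tc k l) + X l (w - tc k l) else 0)%N
                else X h w
  | Comp k => if h == k then (if tl k <= w then X k (w - tl k) else 0)%N
              else X h w
  end.

(* T_i(t) along a realization: act t' = event at iteration t',
   tauc t' k l = tau_c^{kl}(t'), taul t' k = tau_l^k(t'). *)
Fixpoint Tt n (act : nat -> action n) (tauc : nat -> 'I_n -> 'I_n -> nat)
  (taul : nat -> 'I_n -> nat) (t : nat) : 'I_n -> nat :=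
  match t with
  | 0 => fun _ => 0%N
  | t'.+1 => stepT (act t') (tauc t') (taul t') (Tt act tauc taul t')
  end.

Fixpoint Xt n (act : nat -> action n) (tauc : nat -> 'I_n -> 'I_n -> nat)
  (taul : nat -> 'I_n -> nat) (t : nat) : 'I_n -> nat -> nat :=
  match t with
  | 0 => fun _ w => (w == 0%N : nat)
  | t'.+1 => stepX (act t') (tauc t') (taul t') (Xt act tauc taul t')
  end.

Definition Tmax n act tauc taul t : nat := \max_(i < n) @Tt n act tauc taul t i.

From HB Require Import structures.
From mathcomp Require Import all_boot all_order all_algebra.
From mathcomp Require Import all_classical all_reals all_analysis.
From mathcomp Require Import measurable_realfun.
Import Order.TTheory GRing.Theory Num.Theory.
Local Open Scope classical_set_scope.
Local Open Scope ring_scope.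

(* Along every realization X^t(i, T_i(t)) >= 1: the recursion for X mirrors
   the one for T, and in a communication step the maximizing node supplies one
   of the two summands of X.  Hence if T_max(t) >= nu t and i attains the max,
   the term (w, i) = (T_max(t), i) of the right-hand side is at least 1.  This
   bounds the indicator of the event pointwise by the double series; integrate
   and exchange sum and integral by monotone convergence. *)

Lemma Xt_Tt_gt0 n (act : nat -> action n) tc tl t (i : 'I_n) :
  (0 < Xt act tc tl t i (Tt act tc tl t i))%N.
Proof.
elim: t i => [|t IH] i //=; rewrite /stepX /stepT.
case: (act t) => [k l|k].
- case: ((i == k) || (i == l)); last exact: IH.
  rewrite leq_addl addnK addn_gt0.
  by case: (leqP (Tt act tc tl t k) (Tt act tc tl t l)) => _; rewrite IH ?orbT.
- case: (eqVneq i k) => [->|_]; last exact: IH.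
  by rewrite leq_addl addnK IH.
Qed.

Definition action_enc n (a : action n) : ('I_n * 'I_n) + 'I_n :=
  match a with Comm k l => inl (k, l) | Comp k => inr k end.

Definition action_dec n (x : ('I_n * 'I_n) + 'I_n) : action n :=
  match x with inl (k, l) => Comm k l | inr k => Comp k end.

Lemma action_encK n : cancel (@action_enc n) (@action_dec n).
Proof. by case. Qed.

HB.instance Definition _ n :=
  Countable.copy (action n) (can_type (@action_encK n)).

Section measurable_levels.
Context {d} {T : measurableType d}.

Definition measurable_levels {A : Type} (f : T -> A) :=
  forall a, measurable [set w | f w = a].

Lemma measurable_levels_cst {A : Type} (c : A) :
  measurable_levels (fun _ => c).
Proof.
move=> a; have [->|ca] := pselect (c = a).
  by rewrite (_ : [set _ | a = a] = setT) //; apply/seteqP; split.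
by rewrite (_ : [set _ | c = a] = set0) //; apply/seteqP; split.
Qed.

Lemma measurable_levels_bind {A : countType} {B : Type} (f : T -> A)
    (g : A -> T -> B) :
  measurable_levels f -> (forall a, measurable_levels (g a)) ->
  measurable_levels (fun w => g (f w) w).
Proof.
move=> mf mg b.
rewrite (_ : [set w | g (f w) w = b] =
             \bigcup_a ([set w | f w = a] `&` [set w | g a w = b])).
  apply: countable_bigcupT_measurable => [|a]; first exact: countableP.
  exact: measurableI (mf a) (mg a b).
apply/seteqP; split=> w /=; first by exists (f w).
by case=> a _ [/= <-].
Qed.

Lemma measurable_levels_map2 {A B : countType} {C : Type} (F : A -> B -> C)
    (f : T -> A) (g : T -> B) :
  measurable_levels f -> measurable_levels g ->
  measurable_levels (fun w => F (f w) (g w)).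
Proof.
move=> mf mg; apply: (measurable_levels_bind f (fun a w => F a (g w))) => //.
move=> a; apply: (measurable_levels_bind g (fun b _ => F a b)) => // b.
exact: measurable_levels_cst.
Qed.

Lemma measurable_levels_preimage {A : countType} (f : T -> A) (S : set A) :
  measurable_levels f -> measurable (f @^-1` S).
Proof.
move=> mf; rewrite (_ : f @^-1` S = \bigcup_(a in S) [set w | f w = a]).
  rewrite bigcup_mkcond; apply: countable_bigcupT_measurable => [|a].
    exact: countableP.
  by case: ifP.
apply/seteqP; split=> w /=; first by exists (f w).
by case=> a Sa fwa; rewrite /preimage /= fwa.
Qed.

Lemma measurable_levels_EFin_natr (R : realType) (f : T -> nat) :
  measurable_levels f -> measurable_fun setT (fun w => (f w)%:R%:E : \bar R).
Proof.
move=> mf _ Y _; rewrite setTI.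
exact: (measurable_levels_preimage f [set m | Y m%:R%:E]).
Qed.

Lemma measurable_levels_bigmax (I : Type) (r : seq I) (F : I -> T -> nat) :
  (forall i, measurable_levels (F i)) ->
  measurable_levels (fun w => \big[maxn/0%N]_(i <- r) F i w).
Proof.
move=> mF; elim: r => [|i r IH].
  rewrite (_ : (fun w => _) = fun _ => 0%N); first exact: measurable_levels_cst.
  by apply/funext => w; rewrite big_nil.
rewrite (_ : (fun w => _) = fun w => maxn (F i w) (\big[maxn/0%N]_(j <- r) F j w)).
  exact: measurable_levels_map2.
by apply/funext => w; rewrite big_cons.
Qed.

Variable n : nat.
Variables (a : T -> action n) (tc : T -> 'I_n -> 'I_n -> nat)
  (tl : T -> 'I_n -> nat).
Hypothesis a_meas : measurable_levels a.
Hypothesis tc_meas : forall k l, measurable_levels (fun w => tc w k l).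
Hypothesis tl_meas : forall k, measurable_levels (fun w => tl w k).

Lemma measurable_levels_stepX (X : T -> 'I_n -> nat -> nat) :
  (forall i v, measurable_levels (fun w => X w i v)) ->
  forall i v, measurable_levels (fun w => stepX (a w) (tc w) (tl w) (X w) i v).
Proof.
move=> mX i v.
apply: (measurable_levels_bind a (fun b w => stepX b (tc w) (tl w) (X w) i v)).
  exact: a_meas.
move=> b; case: b => [k l|k]; rewrite /stepX.
- case: ((i == k) || (i == l)); last exact: mX.
  apply: (measurable_levels_bind (fun w => tc w k l)
    (fun c w => if c <= v then X w k (v - c) + X w l (v - c) else 0)%N).
    exact: tc_meas.
  move=> c; case: (c <= v)%N; last exact: measurable_levels_cst.
  exact: measurable_levels_map2.
- case: (i == k); last exact: mX.
  apply: (measurable_levels_bind (fun w => tl w k)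
    (fun c w => if c <= v then X w k (v - c) else 0)%N).
    exact: tl_meas.
  move=> c; case: (c <= v)%N; last exact: measurable_levels_cst.
  exact: mX.
Qed.

Lemma measurable_levels_stepT (Tw : T -> 'I_n -> nat) :
  (forall i, measurable_levels (fun w => Tw w i)) ->
  forall i, measurable_levels (fun w => stepT (a w) (tc w) (tl w) (Tw w) i).
Proof.
move=> mT i.
apply: (measurable_levels_bind a (fun b w => stepT b (tc w) (tl w) (Tw w) i)).
  exact: a_meas.
move=> b; case: b => [k l|k]; rewrite /stepT.
- case: ((i == k) || (i == l)); last exact: mT.
  by apply: measurable_levels_map2 => //; exact: measurable_levels_map2.
- case: (i == k); last exact: mT.
  exact: measurable_levels_map2.
Qed.

End measurable_levels.

Section random_realization.
Context {d} {T : measurableType d} {n : nat} {act : nat -> T -> action n}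
  {tauc : nat -> 'I_n -> 'I_n -> T -> nat} {taul : nat -> 'I_n -> T -> nat}.
Hypothesis act_meas : forall s, measurable_levels (act s).
Hypothesis tauc_meas : forall s k l, measurable_levels (tauc s k l).
Hypothesis taul_meas : forall s k, measurable_levels (taul s k).

Lemma measurable_levels_Xt t i v :
  measurable_levels (fun w => Xt (act^~ w) (fun s k l => tauc s k l w)
                                 (fun s k => taul s k w) t i v).
Proof.
elim: t i v => [|t IH] i v; first exact: measurable_levels_cst.
exact: measurable_levels_stepX.
Qed.

Lemma measurable_levels_Tmax t :
  measurable_levels (fun w => Tmax (act^~ w) (fun s k l => tauc s k l w)
                                   (fun s k => taul s k w) t).
Proof.
apply: measurable_levels_bigmax => i.
elim: t i => [|t IH] i; first exact: measurable_levels_cst.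
exact: measurable_levels_stepT.
Qed.

End random_realization.

Section union_bound.
Context d (T : measurableType d) (R : realType)
  (mu : {measure set T -> \bar R}).
Local Open Scope ereal_scope.

Lemma measure_le_nneseries_integral (A : set T) (f : nat -> T -> \bar R) :
  measurable A -> (forall v, measurable_fun setT (f v)) ->
  (forall v w, 0 <= f v w) -> (forall w, A w -> exists v, 1 <= f v w) ->
  mu A <= \sum_(v <oo) \int[mu]_w f v w.
Proof.
move=> mA mf f0 cover; rewrite -integral_nneseries //.
have -> : mu A = \int[mu]_w (\1_A w)%:E by rewrite integral_indic // setIT.
apply: ge0_le_integral => //.
- by apply/measurable_EFinP; exact: measurable_indic.
- by apply: ge0_emeasurable_sum => // k w _ _.
move=> w _; rewrite indicE; case: (boolP (w \in A)) => [/set_mem Aw|_].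
  have [v f1] := cover w Aw.
  apply: le_trans (nneseries_lim_ge v.+1 _) => //.
  by rewrite big_nat_recr //= lee_paddl // sume_ge0.
by apply: nneseries_ge0.
Qed.

Lemma measure_le_nneseries_sum_integral (A : set T) (P : pred nat)
    (I : finType) (g : nat -> I -> T -> \bar R) :
  measurable A -> (forall v i, measurable_fun setT (g v i)) ->
  (forall v i w, 0 <= g v i w) ->
  (forall w, A w -> exists v i, P v /\ 1 <= g v i w) ->
  mu A <= \sum_(v <oo | P v) \sum_(i : I) \int[mu]_w g v i w.
Proof.
move=> mA mg g0 cover.
pose f v w := if P v then \sum_(i : I) g v i w else 0.
have f0 v w : 0 <= f v w by rewrite /f; case: ifP => // _; exact: sume_ge0.
rewrite eseries_mkcond (@eq_eseriesr _ _ (fun v => \int[mu]_w f v w)).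
  apply: measure_le_nneseries_integral => //.
    by move=> v; rewrite /f; case: (P v); [exact: emeasurable_sum|].
  move=> w /cover [v [i [Pv g1]]]; exists v; rewrite /f Pv (bigD1 i) //=.
  by apply: le_trans g1 _; rewrite lee_paddr // sume_ge0.
by move=> v _; rewrite /f; case: (P v); rewrite ?ge0_integral_sum ?integral0.
Qed.

End union_bound.

Theorem lemma3 (R : realType) (d : measure_display) (Omega : measurableType d)
  (P : probability Omega R) (n : nat) (edge : rel 'I_n)
  (p : 'I_n -> 'I_n -> R) (pc : 'I_n -> R)
  (act : nat -> Omega -> action n)
  (tauc : nat -> 'I_n -> 'I_n -> Omega -> nat)
  (taul : nat -> 'I_n -> Omega -> nat)
  (edge_sym : symmetric edge) (edge_irr : irreflexive edge)
  (p_ge0 : forall i j, 0 <= p i j) (pc_ge0 : forall i, 0 <= pc i)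
  (p_sum1 : \sum_(i < n) \sum_(j < n | (i < j)%N && edge i j) p i j
            + \sum_(i < n) pc i = 1)
  (act_edge : forall s w k l, act s w = Comm k l -> (k < l)%N && edge k l)
  (act_meas : forall s (a : action n), measurable [set w | act s w = a])
  (tauc_meas : forall s k l (m : nat), measurable [set w | tauc s k l w = m])
  (taul_meas : forall s k (m : nat), measurable [set w | taul s k w = m])
  (act_comm : forall s (k l : 'I_n), (k < l)%N -> edge k l ->
     P [set w | act s w = Comm k l] = (p k l)%:E)
  (act_comp : forall s (k : 'I_n), P [set w | act s w = Comp k] = (pc k)%:E)
  (tauc_pos : forall s k l w, (0 < tauc s k l w)%N)
  (taul_pos : forall s k w, (0 < taul s k w)%N)
  (nu : R) (t : nat) :
  0 < nu ->
  (P [set w | (nu * t%:R <= (Tmax (act^~ w) (fun s k l => tauc s k l w)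
                               (fun s k => taul s k w) t)%:R)%R]
  <= \sum_(v <oo | (nu * t%:R <= v%:R)%R)
       \sum_(i < n) \int[P]_w ((Xt (act^~ w) (fun s k l => tauc s k l w)
                                   (fun s k => taul s k w) t i v)%:R)%:E)%E.
Proof.
move=> _.
(* The bound holds pathwise. *)
have n_gt0 : (0 < n)%N.
  case: posnP => // n0; subst n.
  by move/eqP: p_sum1; rewrite !big_ord0 addr0 eq_sym oner_eq0.
apply: measure_le_nneseries_sum_integral => [|v i|v i w|w /= le_nut_Tmax].
- exact: (measurable_levels_preimage _ [set m | nu * t%:R <= m%:R]
            (measurable_levels_Tmax act_meas tauc_meas taul_meas t)).
- apply: measurable_levels_EFin_natr.
  exact: (measurable_levels_Xt act_meas tauc_meas taul_meas).
- by rewrite lee_fin.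
have [i Tmax_i] := @bigop.eq_bigmax _ (fun i => Tt (act^~ w)
  (fun s k l => tauc s k l w) (fun s k => taul s k w) t i) ltac:(by rewrite card_ord).
exists (Tmax (act^~ w) (fun s k l => tauc s k l w) (fun s k => taul s k w) t), i.
split; first exact: le_nut_Tmax.
by rewrite lee_fin ler1n /Tmax Tmax_i Xt_Tt_gt0.
Qed.
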